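(* Let $n\geq 2$ be an integer and let $CCC(n)$ be the crystal cubic carbon graph with $n$ layers. Then the minimum cardinality of a strong resolving set of $CCC(n)$ is $sdim(CCC(n))=32\times 7^{n-2}-1$.
   Context: All graphs are simple and connected; $d(u,v)$ is the shortest-path distance. For vertices $u,v$, $I_G[u,v]$ is the set of vertices lying on some shortest $u$–$v$ path. A vertex $w$ strongly resolves $u$ and $v$ if $v\in I_G[u,w]$ or $u\in I_G[v,w]$. A set $R$ of vertices is a strong resolving set of $G$ if every two distinct vertices of $G$ are strongly resolved by some vertex of $R$; $sdim(G)$ is the minimum size of a strong resolving set. The cube $C_4\Box P_2$ is the graph on $\{1,\dots,8\}$ with edges $12,23,34,14,56,67,78,58$ and $15,26,37,48$. The crystal cubic carbon $CCC(n)$ is constructed as follows. Its vertex set is partitioned into layers $L_1,\dots,L_n$. Layer $L_1$ is a copy of $C_4\Box P_2$ with vertices $1,\dots,8$. For $2\leq k\leq n$, layer $L_k$ consists of $8\times 7^{k-2}$ vertex-disjoint copies of $C_4\Box P_2$ (called cubes), each cube having a distinguished vertex (the vertex labelled $1$ in its copy) called its head vertex. Each vertex $r\in L_1$ is joined by an edge to the head vertex of exactly one cube of $L_2$ (distinct vertices of $L_1$ to distinct cubes). For $2\leq k<n$, each of the $7$ non-head vertices of each cube of $L_k$ is joined by an edge to the head vertex of exactly one cube of $L_{k+1}$, in such a way that every cube of $L_{k+1}$ has its head joined to exactly one such vertex. There are no other edges. Thus $CCC(n)$ has $8+64\sum_{k=2}^{n}7^{k-2}$ vertices. *)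

From mathcomp Require Import all_boot.
Set Implicit Arguments. Unset Strict Implicit. Unset Printing Implicit Defensive.

Section Graphs.
Variable T : finType.
Variable e : rel T.

Definition walkb (u v : T) (m : nat) : bool :=
  [exists p : m.-tuple T, path e u p && (last u p == v)].

(* shortest-path distance: least m with a u-v walk of length m (in a connected
   graph such an m exists and is < #|T|) *)
Definition dist (u v : T) : nat := find (walkb u v) (iota 0 #|T|).

Definition in_interval (u v w : T) : Prop :=
  exists p : seq T, [/\ path e u p, last u p = v, size p = dist u v & w \in u :: p].

Definition strongly_resolves (w u v : T) : Prop :=
  in_interval u w v \/ in_interval v w u.

Definition strong_resolving_set (R : {set T}) : Prop :=
  forall u v : T, u != v -> exists2 w, w \in R & strongly_resolves w u v.

Definition is_sdim (N : nat) : Prop :=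
  (exists R : {set T}, strong_resolving_set R /\ #|R| = N) /\
  (forall R : {set T}, strong_resolving_set R -> N <= #|R|).
End Graphs.

(* ---------- The cube C4 [] P2 on labels 0..7 (paper's 1..8, head = 0) ---------- *)
Definition cube_edges : seq (nat * nat) :=
  [:: (0,1); (1,2); (2,3); (0,3); (4,5); (5,6); (6,7); (4,7);
      (0,4); (1,5); (2,6); (3,7)].

Definition cube_adj (a b : 'I_8) : bool :=
  (((a : nat), (b : nat)) \in cube_edges) || (((b : nat), (a : nat)) \in cube_edges).

(* ---------- Crystal cubic carbon CCC(n) ----------
   A vertex of layer k (1 <= k <= n) is a sequence [x_1; ...; x_k] of cube labels:
   x_1 is a vertex of the layer-1 cube; the layer-2 cube attached to x_1 has
   vertices [x_1; y]; the layer-(j+1) cube attached to the non-head vertex s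
   (last label <> 0) of a layer-j cube has vertices rcons s y. Hence internal
   entries x_2..x_{k-1} are nonzero.  Encoded as (k-1, t) with t : n.-tuple 'I_8,
   the vertex sequence being take k t, padded by zeros. *)
Definition ccc_valid (n : nat) (x : 'I_n * n.-tuple 'I_8) : bool :=
  [forall i : 'I_n,
     ((x.1 < i) ==> (tnth x.2 i == ord0)) &&
     (((0 < i) && (i < x.1)) ==> (tnth x.2 i != ord0))].

Definition ccc_vertex (n : nat) := {x : 'I_n * n.-tuple 'I_8 | ccc_valid x}.

Definition vseq (n : nat) (x : ccc_vertex n) : seq 'I_8 :=
  take (val x).1.+1 (val x).2.

Definition ccc_rel (n : nat) : rel (ccc_vertex n) := fun x y =>
  let s := vseq x in let s' := vseq y in
  [&& size s == size s', belast ord0 s == belast ord0 s'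
    & cube_adj (last ord0 s) (last ord0 s')]
  (* edge between a vertex and the head of the cube attached to it *)
  || (s' == rcons s ord0) || (s == rcons s' ord0).

(* The cubes of CCC(n) form a tree.  A vertex is determined by its sequence of
   labels, and a geodesic between two vertices climbs from each of them, cube by
   cube, up to the cube in which their label sequences branch apart, and crosses
   that cube along a geodesic of the 3-cube.

   A vertex set meeting every pair of mutually maximally distant (MMD) vertices is
   strongly resolving, and an MMD pair is strongly resolved only by its own two
   vertices.  In CCC(n) the MMD pairs are the antipodal non-head pairs {1, 7},
   {2, 4}, {3, 5} of each of the 8 * 7^(n-2) cubes of the last layer, and all pairs
   of last-layer vertices labelled 6 (the antipode of the head) lying in
   different cubes.  So a strong resolving set contains a vertex of each of the
   3 * 8 * 7^(n-2) antipodal pairs and all but one of the 8 * 7^(n-2) leaves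
   labelled 6; the leaves labelled 1, 2 or 3 together with all leaves labelled 6
   but one attain this bound. *)

From mathcomp Require Import all_boot zify.
Set Implicit Arguments. Unset Strict Implicit. Unset Printing Implicit Defensive.

Lemma find_iota0 (P : pred nat) k N :
  k < N -> P k -> (forall i, i < k -> ~~ P i) -> find P (iota 0 N) = k.
Proof.
move=> ltkN Pk notP; have hasP : has P (iota 0 N).
  by apply/hasP; exists k; rewrite ?mem_iota.
have ltfN : find P (iota 0 N) < N by rewrite -[N in _ < N](size_iota 0) -has_find.
apply/eqP; rewrite eqn_leq; apply/andP; split.
  rewrite leqNgt; apply/negP => ltkf.
  by have := before_find 0 ltkf; rewrite nth_iota ?Pk // (ltn_trans ltkf).
rewrite leqNgt; apply/negP => ltfk.
by have := nth_find 0 hasP; rewrite nth_iota // add0n (negbTE (notP _ ltfk)).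
Qed.

Section DistanceFunction.
Variables (T : finType) (e : rel T) (D : T -> T -> nat).
Hypothesis D_refl : forall x, D x x = 0.
Hypothesis D_edge : forall x y z, e y z -> D x z <= (D x y).+1.
Hypothesis D_descent : forall x y, x != y -> exists z, e y z /\ (D x z).+1 = D x y.

Lemma D_path_last x y p : path e y p -> D x (last y p) <= D x y + size p.
Proof.
elim: p y => [|z p IHp] y /=; first by rewrite addn0.
case/andP=> eyz pz; apply: leq_trans (IHp _ pz) _.
by rewrite addnS -addSn leq_add2r D_edge.
Qed.

Lemma D_path_to x y : exists p, [/\ path e y p, last y p = x & size p = D x y].
Proof.
move Dk: (D x y) => k; elim: k y Dk => [|k IHk] y Dk.
  case: (eqVneq x y) => [->|nxy]; first by exists [::].
  by case: (D_descent nxy) => z [_]; rewrite Dk.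
case: (eqVneq x y) => [exy|nxy]; first by rewrite exy D_refl in Dk.
case: (D_descent nxy) => z [eyz]; rewrite Dk => -[Dz].
case: (IHk z Dz) => p [pz lz sz]; exists (z :: p).
by rewrite /= eyz sz.
Qed.

Lemma D_sym x y : D x y = D y x.
Proof.
suff D_le : forall x y, D y x <= D x y by apply/eqP; rewrite eqn_leq !D_le.
move=> a b; case: (D_path_to a b) => p [pb <- <-].
by have := D_path_last b pb; rewrite D_refl.
Qed.

Lemma D_path x y : exists p, [/\ path e x p, last x p = y & size p = D x y].
Proof. by case: (D_path_to y x) => p [? ? ?]; exists p; rewrite D_sym. Qed.

Lemma D_eq0 x y : D x y = 0 -> x = y.
Proof. by case: (eqVneq x y) => // /D_descent [z [_ <-]]. Qed.

Lemma D_triangle x y z : D x z <= D x y + D y z.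
Proof.
case: (D_path x y) => p [pp lp <-]; case: (D_path y z) => q [pq lq <-].
have := D_path_last x (p := p ++ q) (y := x).
by rewrite cat_path pp lp pq last_cat lp lq D_refl size_cat; apply.
Qed.

Lemma D_lt_card x y : D x y < #|T|.
Proof.
case: (D_path x y) => p [pp <- _]; case: (shortenP pp) => p' pp' up' _.
have := D_path_last x pp'; rewrite D_refl add0n => /leq_ltn_trans; apply.
by rewrite -[(size p').+1]/(size (x :: p')) -(card_uniqP up') max_card.
Qed.

Lemma distE x y : dist e x y = D x y.
Proof.
apply: find_iota0; first exact: D_lt_card.
  case: (D_path x y) => p [pp lp sp]; apply/existsP.
  by exists (Tuple (introT eqP sp)); rewrite /= pp lp eqxx.
move=> i ltiD; apply/existsP => -[t /andP [pt /eqP lt]].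
by have := D_path_last x pt; rewrite lt D_refl size_tuple leqNgt ltiD.
Qed.

Lemma in_intervalE u v w : in_interval e u v w <-> D u w + D w v = D u v.
Proof.
split.
- case=> p [+ + + w_in]; case/splitPl: w_in => p1 p2 lp1.
  rewrite cat_path last_cat distE => /andP [pp1 pp2] lp2 sp.
  move: (D_path_last u pp1) (D_path_last w pp2).
  rewrite lp2 lp1 !D_refl !add0n => Duw Dwv.
  by apply/eqP; rewrite eqn_leq D_triangle -sp size_cat leq_add.
- move=> Duwv; case: (D_path u w) => p [pp lp sp]; case: (D_path w v) => q [pq lq sq].
  exists (p ++ q); rewrite cat_path last_cat pp lp pq lq distE size_cat sp sq.
  by split=> //; rewrite -cat_cons mem_cat -lp mem_last.
Qed.

Definition maximally_distant x y := forall z, e y z -> D x z <= D x y.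

Lemma interval_maximally_distant a b w :
  maximally_distant a b -> in_interval e a w b -> w = b.
Proof.
move=> mab /in_intervalE Dawb; case: (eqVneq w b) => // /D_descent [z [ebz Dz]].
have := mab z ebz; have := D_triangle a z w.
rewrite -Dawb (D_sym z w) (D_sym b w) -Dz; lia.
Qed.

Lemma strongly_resolves_mmd x y w :
  maximally_distant x y -> maximally_distant y x -> strongly_resolves e w x y ->
  w = x \/ w = y.
Proof.
move=> mxy myx [H|H]; [right|left]; exact: interval_maximally_distant H.
Qed.

Lemma mmd_extension u v : u != v -> exists a b,
  [/\ a != b, maximally_distant a b, maximally_distant b a
    & D a b = D a u + D u v + D v b].
Proof.
(* Maximise D a b over the pairs (a, b) having u and v, in this order, on an
   a-b geodesic. *)
move=> nuv; pose P (p : T * T) := D p.1 p.2 == D p.1 u + D u v + D v p.2.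
have P_uv : P (u, v) by rewrite /P /= !D_refl addn0.
case: (arg_maxnP (fun p => D p.1 p.2) P_uv) => -[a b] /eqP /= Dab Dmax.
have Duv : 0 < D u v by rewrite lt0n; apply: contra nuv => /eqP /D_eq0 ->.
exists a, b; split => //.
- by apply/eqP => eab; move: Dab; rewrite eab D_refl; lia.
- move=> z ebz; rewrite leqNgt; apply/negP => Dz.
  have Daz : D a z = (D a b).+1 by apply/eqP; rewrite eqn_leq D_edge.
  have /Dmax : P (a, z).
    have := D_triangle a u z; have := D_triangle u v z; have := D_edge v ebz.
    by rewrite /P /=; lia.
  by rewrite /= Daz ltnn.
- move=> z eaz; rewrite leqNgt; apply/negP => Dz.
  have Dzb : D z b = (D a b).+1.
    by apply/eqP; rewrite D_sym eqn_leq (D_sym a) D_edge.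
  have /Dmax : P (z, b).
    have := D_triangle z u b; have := D_triangle u v b; have := D_edge u eaz.
    by rewrite /P /= !(D_sym u z) !(D_sym u a); lia.
  by rewrite /= Dzb ltnn.
Qed.

Lemma mmd_cover_strong_resolving (R : {set T}) :
  (forall a b, a != b -> maximally_distant a b -> maximally_distant b a ->
     (a \in R) || (b \in R)) ->
  strong_resolving_set e R.
Proof.
move=> cover u v /mmd_extension [a [b [nab mab mba Dab]]].
have := D_triangle a u v; have := D_triangle a v b.
have := D_triangle u v b; have := D_triangle a u b.
case/orP: (cover a b nab mab mba) => [aR|bR] *.
- exists a => //; right; apply/in_intervalE.
  rewrite (D_sym v u) (D_sym u a) (D_sym v a); lia.
- by exists b => //; left; apply/in_intervalE; lia.
Qed.
End DistanceFunction.

Local Notation "''c' k" := (@Ordinal 8 k isT) (at level 0, k at level 0, format "''c' k").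

(* The labels 0..3 and 4..7 form the two 4-cycles of the cube, and i is joined
   to i + 4: the distance is the cyclic distance of the residues mod 4, plus 1
   when the two labels lie on different 4-cycles. *)
Definition cube_dist (a b : 'I_8) : nat :=
  let d := (a %% 4 + 4 - b %% 4) %% 4 in minn d (4 - d) + (a %/ 4 != b %/ 4).

Definition cube_labels : seq 'I_8 := [:: 'c0; 'c1; 'c2; 'c3; 'c4; 'c5; 'c6; 'c7].

Lemma forall_cube (P : pred 'I_8) : all P cube_labels -> forall a, P a.
Proof. by move/allP => P_all a; apply: P_all; case: a; do 8?case => //. Qed.

Lemma forall_cube2 (P : 'I_8 -> 'I_8 -> bool) :
  all (fun a => all (P a) cube_labels) cube_labels -> forall a b, P a b.
Proof. by move=> P_all a; apply: forall_cube; move: a; apply: forall_cube. Qed.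

Lemma forall_cube3 (P : 'I_8 -> 'I_8 -> 'I_8 -> bool) :
  all (fun a => all (fun b => all (P a b) cube_labels) cube_labels) cube_labels ->
  forall a b c, P a b c.
Proof. by move=> P_all a b; apply: forall_cube; move: a b; apply: forall_cube2. Qed.

Lemma cube_dist_refl a : cube_dist a a = 0.
Proof. by apply/eqP; move: a; apply: forall_cube; vm_compute. Qed.

Lemma cube_dist_sym a b : cube_dist a b = cube_dist b a.
Proof. by apply/eqP; move: a b; apply: forall_cube2; vm_compute. Qed.

Lemma cube_dist_le3 a b : cube_dist a b <= 3.
Proof. by move: a b; apply: forall_cube2; vm_compute. Qed.

Lemma cube_dist_edge c b b' : cube_adj b b' -> cube_dist c b' <= (cube_dist c b).+1.
Proof. by apply/implyP; move: c b b'; apply: forall_cube3; vm_compute. Qed.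

Lemma cube_dist_descent c b : b != c ->
  exists2 b', cube_adj b b' & (cube_dist c b').+1 = cube_dist c b.
Proof.
have: forall c b, (b != c) ==>
    has (fun b' => cube_adj b b' && ((cube_dist c b').+1 == cube_dist c b)) cube_labels.
  by apply: forall_cube2; vm_compute.
by move=> /(_ c b) /implyP dsc /dsc /hasP [b' _ /andP [? /eqP ?]]; exists b'.
Qed.

Lemma cube_dist_local_max c b :
  (forall b', cube_adj b b' -> cube_dist c b' <= cube_dist c b) -> cube_dist c b = 3.
Proof.
have: forall c b,
    all (fun b' => cube_adj b b' ==> (cube_dist c b' <= cube_dist c b)) cube_labels ==>
    (cube_dist c b == 3).
  by apply: forall_cube2; vm_compute.
move=> /(_ c b) /implyP max3 local_max; apply/eqP/max3.
by apply/allP => b' _; apply/implyP/local_max.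
Qed.

Lemma cube_dist3_neq c b : cube_dist c b = 3 -> b != c.
Proof. by move=> D3; apply/eqP => ebc; rewrite ebc cube_dist_refl in D3. Qed.

Lemma cube_dist_head3 b : cube_dist ord0 b = 3 -> b = 'c6.
Proof.
have: forall b, (cube_dist ord0 b == 3) ==> (b == 'c6).
  by apply: forall_cube; vm_compute.
by move=> /(_ b) /implyP head3 /eqP /head3 /eqP.
Qed.

(* The antipodal pairs of non-head labels are {1, 7}, {2, 4} and {3, 5}. *)
Lemma cube_antipodal_nonhead a b : a != ord0 -> b != ord0 -> cube_dist a b = 3 ->
  (a \in [:: 'c1; 'c2; 'c3]) || (b \in [:: 'c1; 'c2; 'c3]).
Proof.
have: forall a b, [==> a != ord0, b != ord0, cube_dist a b == 3 =>
    (a \in [:: 'c1; 'c2; 'c3]) || (b \in [:: 'c1; 'c2; 'c3])].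
  by apply: forall_cube2; vm_compute.
by move=> /(_ a b) antipodal na nb /eqP D3; rewrite na nb D3 in antipodal.
Qed.

(* [climb l] is the distance from the vertex [P ++ l] up to the vertex [P] its
   branch hangs off: in each cube walk to the head, then go up one edge.  Since the
   cubes form a tree, [label_dist] is the distance between label sequences: strip
   the common prefix, climb from both sides up to the cube where the sequences
   branch apart, and cross that cube. *)
Definition climb (l : seq 'I_8) : nat := sumn [seq (cube_dist y ord0).+1 | y <- l].

Fixpoint label_dist (s t : seq 'I_8) : nat :=
  match s, t with
  | [::], _ => climb t
  | _ :: _, [::] => climb s
  | y :: l, z :: l' =>
      if y == z then label_dist l l' else climb l + cube_dist y z + climb l'
  end.

Lemma climb_cat a b : climb (a ++ b) = climb a + climb b.
Proof. by rewrite /climb map_cat sumn_cat. Qed.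

Lemma label_dist_nil_r s : label_dist s [::] = climb s.
Proof. by case: s. Qed.

Lemma label_dist_prefix P s t : label_dist (P ++ s) (P ++ t) = label_dist s t.
Proof. by elim: P => //= y P IHP; rewrite eqxx. Qed.

Lemma label_dist_refl s : label_dist s s = 0.
Proof. by rewrite -(cats0 s) label_dist_prefix. Qed.

(* The cube addressed by [P] has the vertices [rcons P b]; either [s] passes
   through it, at the label [c], or not. *)
Variant branch_spec (s P : seq 'I_8) : Type :=
  | Branch c l of s = P ++ c :: l
  | OffBranch of (forall c l, s != P ++ c :: l).

Lemma branchP s P : branch_spec s P.
Proof.
have [/andP [ltPs /eqP takeP]|off] := boolP ((size P < size s) && (take (size P) s == P)).
  apply: (@Branch _ _ (nth ord0 s (size P)) (drop (size P).+1 s)).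
  by rewrite -{1}(cat_take_drop (size P) s) takeP (drop_nth ord0 ltPs).
apply: OffBranch => c l; apply: contra off => /eqP ->.
by rewrite size_cat /= take_size_cat // addnS ltnS leq_addr eqxx.
Qed.

Lemma label_dist_cube P c l b :
  label_dist (P ++ c :: l) (rcons P b) = climb l + cube_dist c b.
Proof.
rewrite -cats1 label_dist_prefix /=; case: eqP => [->|_]; last by rewrite addn0.
by rewrite label_dist_nil_r cube_dist_refl addn0.
Qed.

Lemma label_dist_child P c l b : b != c ->
  label_dist (P ++ c :: l) (rcons (rcons P b) ord0) = (climb l + cube_dist c b).+1.
Proof.
move=> nbc; rewrite -!cats1 -catA label_dist_prefix /= eq_sym (negbTE nbc).
by rewrite /climb /= cube_dist_refl addn0 addn1.
Qed.

Lemma label_dist_own_child P c l :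
  label_dist (P ++ c :: l) (rcons (rcons P c) ord0) = label_dist l [:: ord0].
Proof. by rewrite -!cats1 -catA label_dist_prefix /= eqxx. Qed.

Lemma label_dist_head l : l != [::] -> (label_dist l [:: ord0]).+1 = climb l.
Proof.
case: l => // y l _ /=; case: eqP => [->|_].
  by rewrite label_dist_nil_r /climb /= cube_dist_refl.
by rewrite /climb /= addn0 addnC addSn.
Qed.

Lemma label_dist_parent P c l :
  label_dist (P ++ c :: l) P = climb l + (cube_dist c ord0).+1.
Proof. by rewrite -{2}(cats0 P) label_dist_prefix label_dist_nil_r addnC. Qed.

Lemma label_dist_off_branch P s v : (forall c l, s != P ++ c :: l) ->
  label_dist s (P ++ v) = label_dist s P + climb v.
Proof.
elim: P s => [|z P IHP] [|y l] /= off.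
- by [].
- by have := off y l; rewrite eqxx.
- by rewrite -cat_cons climb_cat.
case: eqP => [eyz|_]; last by rewrite climb_cat !addnA.
by rewrite IHP // => c l'; apply: contra (off c l') => /eqP ->; rewrite eyz.
Qed.

Lemma label_dist_off_branch_cube P s b : (forall c l, s != P ++ c :: l) ->
  label_dist s (rcons P b) = label_dist s P + (cube_dist ord0 b).+1.
Proof.
by move=> off; rewrite -cats1 label_dist_off_branch // /climb /= addn0 cube_dist_sym.
Qed.

Lemma label_dist_child_parent s P b :
  label_dist s (rcons (rcons P b) ord0) <= (label_dist s (rcons P b)).+1 /\
  label_dist s (rcons P b) <= (label_dist s (rcons (rcons P b) ord0)).+1.
Proof.
case: (branchP s P) => [c l ->|off].
  case: (eqVneq b c) => [->|nbc].
    rewrite label_dist_own_child label_dist_cube cube_dist_refl addn0.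
    case: (eqVneq l [::]) => [->|/label_dist_head <-] //; lia.
  by rewrite label_dist_child // label_dist_cube; lia.
rewrite -!cats1 -catA !label_dist_off_branch //= /climb /= cube_dist_refl; lia.
Qed.

Section Vertices.
Variable m : nat.
Local Notation n := m.+2.
Local Notation V := (ccc_vertex n).

Definition inner (s : seq 'I_8) := behead (take (size s).-1 s).

(* The label sequences of vertices: the inner labels are non-head, since the
   cubes hang off non-head vertices. *)
Definition admissible (s : seq 'I_8) :=
  (0 < size s <= n) && all (fun y => y != ord0) (inner s).

Lemma admissibleP s : reflect
  ((0 < size s <= n) /\ forall i, 0 < i < (size s).-1 -> nth ord0 s i != ord0)
  (admissible s).
Proof.
have size_inner : size (inner s) = (size s).-2.
  by rewrite size_behead size_takel // leq_pred.
have nth_inner i : i.+1 < (size s).-1 -> nth ord0 (inner s) i = nth ord0 s i.+1.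
  by move=> lti; rewrite nth_behead nth_take.
apply: (iffP andP) => [[size_s /(all_nthP ord0) inner0]|[size_s inner0]].
  split=> // -[//|i] /andP [_ lti]; rewrite -nth_inner //.
  by apply: inner0; rewrite size_inner; lia.
split=> //; apply/(all_nthP ord0) => i; rewrite size_inner => lti.
by rewrite nth_inner; [apply: inner0|]; lia.
Qed.

Lemma admissible_rcons P b :
  admissible (rcons P b) = (size P < n) && all (fun y => y != ord0) (behead P).
Proof. by rewrite /admissible /inner size_rcons /= -cats1 take_size_cat. Qed.

Lemma admissible_relabel P b b' : admissible (rcons P b) -> admissible (rcons P b').
Proof. by rewrite !admissible_rcons. Qed.

Lemma admissible_child P b : admissible (rcons P b) -> size P <= m ->
  (P == [::]) || (b != ord0) -> admissible (rcons (rcons P b) ord0).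
Proof.
rewrite !admissible_rcons size_rcons => /andP [_ P_ok] lePm; rewrite !ltnS lePm /=.
by case: P P_ok {lePm} => //= p P P_ok b0; rewrite all_rcons P_ok andbT.
Qed.

Lemma admissible_parent P b :
  admissible (rcons (rcons P b) ord0) -> admissible (rcons P b).
Proof.
rewrite !admissible_rcons size_rcons => /andP [ltPn P_ok]; rewrite ltnW //=.
by case: P P_ok {ltPn} => //= p P; rewrite all_rcons => /andP [].
Qed.

Lemma admissible_branch_child P c l : l != [::] ->
  admissible (P ++ c :: l) -> admissible (rcons (rcons P c) ord0).
Proof.
case/lastP: l => // l x _.
rewrite -rcons_cons -rcons_cat !admissible_rcons size_rcons size_cat /=.
case/andP=> ltn P_ok; apply/andP; split; first lia.
by move: P_ok; rewrite -cat_rcons; case: P {ltn} => //= p P; rewrite all_cat => /andP [].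
Qed.

Lemma vseq_size (x : V) : size (vseq x) = (val x).1.+1.
Proof. by rewrite /vseq size_takel // size_tuple ltn_ord. Qed.

Lemma vseq_nil (x : V) : vseq x <> [::].
Proof. by move=> vx0; have := vseq_size x; rewrite vx0. Qed.

Definition cube_of (x : V) := behead (belast ord0 (vseq x)).
Definition last_label (x : V) := last ord0 (vseq x).

Lemma vseq_cube_of (x : V) : vseq x = rcons (cube_of x) (last_label x).
Proof.
rewrite /cube_of /last_label; case/lastP vx: (vseq x) => [|P b].
  by case: (vseq_nil vx).
by rewrite belast_rcons last_rcons.
Qed.

Lemma ccc_validP (x : 'I_n * n.-tuple 'I_8) : ccc_valid x ->
  forall i : 'I_n, (x.1 < i -> tnth x.2 i = ord0) /\ (0 < i < x.1 -> tnth x.2 i != ord0).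
Proof. by move/forallP => x_ok i; case/andP: (x_ok i) => /implyP/(_ _)/eqP ? /implyP. Qed.

Lemma nth_vseq (x : V) i : i <= (val x).1 -> nth ord0 (vseq x) i = nth ord0 (val x).2 i.
Proof. by move=> le_i; rewrite /vseq nth_take. Qed.

Lemma vseq_admissible (x : V) : admissible (vseq x).
Proof.
apply/admissibleP; rewrite vseq_size; split; first by rewrite ltn_ord.
case: x => [[k t] x_ok] /= i lti; have ltin : i < n by have := ltn_ord k; lia.
rewrite (@nth_vseq (exist _ (k, t) x_ok)) /=; last lia.
by have := (ccc_validP x_ok (Ordinal ltin)).2; rewrite (tnth_nth ord0) /=; apply; lia.
Qed.

Lemma vseq_inj : injective (@vseq n).
Proof.
move=> x y vxy; apply: val_inj.
have eq1 : (val x).1 = (val y).1.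
  by apply: val_inj; apply: succn_inj; rewrite -!vseq_size vxy.
case: x y vxy eq1 => [[k t] x_ok] [[k' t'] y_ok] /= vxy eq1; subst k'; congr pair.
apply: eq_from_tnth => i; rewrite !(tnth_nth ord0); case: (leqP i k) => lei.
  by move: vxy; rewrite /vseq /= => /(congr1 (nth ord0 ^~ i)); rewrite !nth_take.
by rewrite -!(tnth_nth ord0) ((ccc_validP x_ok i).1 lei) ((ccc_validP y_ok i).1 lei).
Qed.

Definition encode (s : seq 'I_8) : 'I_n * n.-tuple 'I_8 :=
  (inord (size s).-1, [tuple nth ord0 s i | i < n]).

Lemma encode_valid s : admissible s -> ccc_valid (encode s).
Proof.
case/admissibleP => [/andP [gt0 len] inner0]; apply/forallP => i /=.
rewrite inordK; last lia.
rewrite tnth_mktuple; apply/andP; split; apply/implyP => lti.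
  by rewrite nth_default //; lia.
exact: inner0.
Qed.

(* [x0] is only returned for a non-admissible [s]. *)
Definition vertex_of (x0 : V) (s : seq 'I_8) : V := insubd x0 (encode s).

Lemma vseq_vertex_of x0 s : admissible s -> vseq (vertex_of x0 s) = s.
Proof.
move=> s_ok; rewrite /vseq /vertex_of val_insubd (encode_valid s_ok).
change (take (inord (size s).-1 : 'I_n).+1 [tuple nth ord0 s i | i < n] = s).
case/admissibleP: s_ok => [/andP [gt0 len] _]; rewrite inordK; last lia.
rewrite prednK //; apply: (@eq_from_nth _ ord0); first by rewrite size_takel // size_tuple.
move=> i; rewrite size_takel ?size_tuple // => lti.
have ltin : i < n by lia.
by rewrite nth_take // -(tnth_nth ord0 _ (Ordinal ltin)) tnth_mktuple.
Qed.
End Vertices.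

Section Distance.
Variable m : nat.
Local Notation n := m.+2.
Local Notation V := (ccc_vertex n).
Local Notation admissible := (admissible m).

Lemma ccc_rel_cases (y z : V) : ccc_rel y z ->
  (exists P b b', [/\ vseq y = rcons P b, vseq z = rcons P b' & cube_adj b b'])
  \/ vseq z = rcons (vseq y) ord0 \/ vseq y = rcons (vseq z) ord0.
Proof.
case/orP => [/orP [|/eqP ->]|/eqP ->]; [|by right; left|by right; right].
case/and3P => _; case/lastP E1: (vseq y) => [|P b]; first by case: (vseq_nil E1).
case/lastP E2: (vseq z) => [|P' b']; first by case: (vseq_nil E2).
by rewrite !belast_rcons !last_rcons => /eqP [<-] adj; left; exists P, b, b'.
Qed.

Lemma ccc_rel_cube (y z : V) P b b' :
  vseq y = rcons P b -> vseq z = rcons P b' -> cube_adj b b' -> ccc_rel y z.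
Proof.
move=> vy vz adj; apply/orP; left; apply/orP; left.
by rewrite vy vz !size_rcons !belast_rcons !last_rcons !eqxx adj.
Qed.

Lemma ccc_rel_child (y z : V) : vseq z = rcons (vseq y) ord0 -> ccc_rel y z.
Proof. by move=> vz; apply/orP; left; apply/orP; right; rewrite vz. Qed.

Lemma ccc_rel_parent (y z : V) : vseq y = rcons (vseq z) ord0 -> ccc_rel y z.
Proof. by move=> vy; apply/orP; right; rewrite vy. Qed.

Lemma exists_cube_neighbour (y : V) P b b' :
  vseq y = rcons P b -> cube_adj b b' -> exists2 z, ccc_rel y z & vseq z = rcons P b'.
Proof.
move=> vy adj; have y_ok := vseq_admissible y; rewrite vy in y_ok.
have z_ok : admissible (rcons P b') by apply: admissible_relabel y_ok.
exists (vertex_of y (rcons P b')); last exact: vseq_vertex_of.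
by apply: (ccc_rel_cube vy _ adj); rewrite vseq_vertex_of.
Qed.

Lemma exists_child_head (y : V) : admissible (rcons (vseq y) ord0) ->
  exists2 z, ccc_rel y z & vseq z = rcons (vseq y) ord0.
Proof.
move=> z_ok; exists (vertex_of y (rcons (vseq y) ord0)); last exact: vseq_vertex_of.
by apply: ccc_rel_child; rewrite vseq_vertex_of.
Qed.

Lemma exists_parent (y : V) P : vseq y = rcons P ord0 -> P != [::] ->
  exists2 z, ccc_rel y z & vseq z = P.
Proof.
move=> vy P0; have y_ok := vseq_admissible y; rewrite vy in y_ok.
have z_ok : admissible P.
  by case/lastP: P P0 y_ok {vy} => // P b _; apply: admissible_parent.
exists (vertex_of y P); last exact: vseq_vertex_of.
by apply: ccc_rel_parent; rewrite vseq_vertex_of.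
Qed.

Definition ccc_dist (x y : V) := label_dist (vseq x) (vseq y).

Lemma ccc_dist_refl x : ccc_dist x x = 0.
Proof. exact: label_dist_refl. Qed.

Lemma ccc_dist_edge x y z : ccc_rel y z -> ccc_dist x z <= (ccc_dist x y).+1.
Proof.
rewrite /ccc_dist; case/ccc_rel_cases => [[P [b [b' [-> -> adj]]]]|[->|->]].
- case: (branchP (vseq x) P) => [c l ->|off].
    by rewrite !label_dist_cube -addnS leq_add2l cube_dist_edge.
  by rewrite !label_dist_off_branch_cube // -addnS leq_add2l ltnS cube_dist_edge.
- case/lastP E: (vseq y) => [|P b]; first by case: (vseq_nil E).
  exact: (label_dist_child_parent _ P b).1.
- case/lastP E: (vseq z) => [|P b]; first by case: (vseq_nil E).
  exact: (label_dist_child_parent _ P b).2.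
Qed.

Lemma ccc_dist_descent (x y : V) :
  x != y -> exists z, ccc_rel y z /\ (ccc_dist x z).+1 = ccc_dist x y.
Proof.
move=> nxy; have nvxy : vseq x != vseq y by apply: contra nxy => /eqP /vseq_inj ->.
have x_ok := vseq_admissible x; rewrite /ccc_dist.
case/lastP vy: (vseq y) nvxy => [|P b] nvxy; first by case: (vseq_nil vy).
case: (branchP (vseq x) P) => [c l vx | off].
- rewrite vx in nvxy x_ok *; case: (eqVneq b c) => [ebc|nbc].
  + subst b; have l0 : l != [::] by apply: contra nvxy => /eqP ->; rewrite cats1.
    have := admissible_branch_child l0 x_ok; rewrite -vy => /exists_child_head [z yz vz].
    exists z; split; rewrite // vz vy label_dist_own_child label_dist_cube.
    by rewrite cube_dist_refl addn0 label_dist_head.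
  + case: (cube_dist_descent nbc) => b' /(exists_cube_neighbour vy) [z yz vz] Dz.
    by exists z; split; rewrite // vz !label_dist_cube -addnS Dz.
- case: (eqVneq b ord0) => [eb0|nb0].
  + subst b; have P0 : P != [::].
      apply/eqP => P0; case vx: (vseq x) => [|c l]; first by case: (vseq_nil vx).
      by have := off c l; rewrite vx P0 eqxx.
    case: (exists_parent vy P0) => z yz vz; exists z; split; rewrite // vz.
    by rewrite label_dist_off_branch_cube // cube_dist_refl addn1.
  + case: (cube_dist_descent nb0) => b' /(exists_cube_neighbour vy) [z yz vz] Dz.
    by exists z; split; rewrite // vz !label_dist_off_branch_cube // -Dz !addnS.
Qed.
End Distance.

Section MaximallyDistant.
Variable m : nat.
Local Notation n := m.+2.
Local Notation V := (ccc_vertex n).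
Local Notation admissible := (admissible m).
Local Notation maxd := (maximally_distant (@ccc_rel n) (@ccc_dist m)).

Lemma rcons_branch (T : Type) (P Q : seq T) a c l :
  size P = size Q -> rcons Q a = P ++ c :: l -> [/\ Q = P, a = c & l = [::]].
Proof.
move=> sPQ eQP; have := congr1 size eQP; rewrite size_rcons size_cat /= sPQ => sl.
have l0 : l = [::] by case: l {eQP} sl => //= ? ?; lia.
by move: eQP; rewrite l0 cats1 => /rcons_inj [-> ->].
Qed.

Lemma maximally_distant_cube (x y : V) P b : maxd x y -> vseq y = rcons P b ->
  (forall c l, vseq x = P ++ c :: l -> cube_dist c b = 3) /\
  ((forall c l, vseq x != P ++ c :: l) -> cube_dist ord0 b = 3).
Proof.
move=> max vy; have local_max b' : cube_adj b b' ->
    label_dist (vseq x) (rcons P b') <= label_dist (vseq x) (rcons P b).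
  by case/(exists_cube_neighbour vy) => z /max; rewrite /ccc_dist vy => + <-.
case: (branchP (vseq x) P) => [c l vx|off].
  split=> [c' l'|/(_ c l)]; last by rewrite vx eqxx.
  rewrite vx => /(congr1 (drop (size P))); rewrite !drop_size_cat // => -[<- _].
  apply: cube_dist_local_max => b' /local_max.
  by rewrite vx !label_dist_cube leq_add2l.
split=> [c l vx|_]; first by have := off c l; rewrite vx eqxx.
apply: cube_dist_local_max => b' /local_max.
by rewrite !label_dist_off_branch_cube // leq_add2l.
Qed.

Lemma maximally_distant_nonhead (x y : V) P b :
  maxd x y -> vseq y = rcons P b -> b != ord0.
Proof.
move=> max vy; have y_ok := vseq_admissible y; rewrite vy in y_ok.
case: (maximally_distant_cube max vy) => on_branch off_branch.
apply/eqP => b0; subst b.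
case: (branchP (vseq x) P) => [c l vx|/off_branch]; last by rewrite cube_dist_refl.
have c3 := on_branch c l vx; have nc0 : ord0 != c by apply: cube_dist3_neq.
case: (eqVneq P [::]) => [P0|P0].
  subst P; have := admissible_child y_ok (leq0n m) isT; rewrite -vy.
  case/exists_child_head => z /max; rewrite /ccc_dist vy => /[swap] ->.
  by rewrite vx (label_dist_child [::]) // label_dist_cube ltnn.
case: (exists_parent vy P0) => z /max; rewrite /ccc_dist vy => /[swap] ->.
by rewrite vx label_dist_parent label_dist_cube c3 addnS ltnn.
Qed.

Lemma maximally_distant_leaf (x y : V) P b :
  maxd x y -> vseq y = rcons P b -> size P = m.+1.
Proof.
move=> max vy; have y_ok := vseq_admissible y; rewrite vy in y_ok.
have nb0 := maximally_distant_nonhead max vy.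
case: (maximally_distant_cube max vy) => on_branch _.
move: (y_ok); rewrite admissible_rcons => /andP [ltPn _].
apply/eqP; rewrite eqn_leq -ltnS ltPn /= leqNgt; apply/negP => ltPm.
have: admissible (rcons (vseq y) ord0).
  by rewrite vy; apply: admissible_child; rewrite // nb0 orbT.
case/exists_child_head => z /max; rewrite /ccc_dist vy => /[swap] ->.
case: (branchP (vseq x) P) => [c l vx|off].
  rewrite vx label_dist_child ?label_dist_cube ?ltnn //.
  exact: cube_dist3_neq (on_branch c l vx).
rewrite -!cats1 -catA !label_dist_off_branch // /climb /= cube_dist_refl; lia.
Qed.

Lemma leaf_maximally_distant (x y : V) P b :
  vseq y = rcons P b -> size P = m.+1 -> b != ord0 ->
  (forall c l, vseq x = P ++ c :: l -> cube_dist c b = 3) ->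
  ((forall c l, vseq x != P ++ c :: l) -> cube_dist ord0 b = 3) -> maxd x y.
Proof.
move=> vy sP nb0 on_branch off_branch z; rewrite /ccc_dist.
case/ccc_rel_cases => [[P' [b1 [b' [vy' vz adj]]]]|[vz|vy']].
- move: vy'; rewrite vy => /rcons_inj [eP eb]; subst P' b1; rewrite vz.
  case: (branchP (vseq x) P) => [c l vx|off].
    by rewrite vx !label_dist_cube leq_add2l (on_branch c l vx) cube_dist_le3.
  by rewrite !label_dist_off_branch_cube // leq_add2l ltnS (off_branch off) cube_dist_le3.
- by have := vseq_admissible z; rewrite vz vy admissible_rcons size_rcons sP; lia.
- by move: vy; rewrite vy' => /rcons_inj [_ b0]; rewrite -b0 eqxx in nb0.
Qed.

Lemma mmd_siblings (x y : V) P a b :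
  vseq x = rcons P a -> vseq y = rcons P b -> size P = m.+1 ->
  a != ord0 -> b != ord0 -> cube_dist a b = 3 -> maxd x y /\ maxd y x.
Proof.
move=> vx vy sP na nb ab3; split.
- apply: (leaf_maximally_distant vy) => // [c l|/(_ a [::])]; last by rewrite vx cats1 eqxx.
  by rewrite vx => /(rcons_branch (erefl _)) [_ <-].
- apply: (leaf_maximally_distant vx) => // [c l|/(_ b [::])]; last by rewrite vy cats1 eqxx.
  by rewrite vy cube_dist_sym => /(rcons_branch (erefl _)) [_ <-].
Qed.

Lemma mmd_antipodes_of_heads (x y : V) P Q :
  vseq x = rcons P 'c6 -> vseq y = rcons Q 'c6 -> size P = m.+1 -> size Q = m.+1 ->
  P != Q -> maxd x y /\ maxd y x.
Proof.
move=> vx vy sP sQ nPQ; split.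
- apply: (leaf_maximally_distant vy) => // c l.
  by rewrite vx => /(rcons_branch (etrans sQ (esym sP))) [ePQ _]; rewrite ePQ eqxx in nPQ.
- apply: (leaf_maximally_distant vx) => // c l.
  by rewrite vy => /(rcons_branch (etrans sP (esym sQ))) [eQP _]; rewrite eQP eqxx in nPQ.
Qed.
Lemma mmd_same_cube (x y : V) : maxd x y -> maxd y x -> cube_of x = cube_of y ->
  (last_label x \in [:: 'c1; 'c2; 'c3]) || (last_label y \in [:: 'c1; 'c2; 'c3]).
Proof.
move=> mxy myx same; have vx := vseq_cube_of x; have vy := vseq_cube_of y.
apply: (cube_antipodal_nonhead (maximally_distant_nonhead myx vx)
  (maximally_distant_nonhead mxy vy)).
case: (maximally_distant_cube mxy vy) => on_branch _.
by apply: (on_branch _ [::]); rewrite vx cats1 same.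
Qed.

Lemma mmd_other_cubes (x y : V) : maxd x y -> maxd y x -> cube_of x != cube_of y ->
  last_label y = 'c6.
Proof.
move=> mxy myx other; have vx := vseq_cube_of x; have vy := vseq_cube_of y.
have sx := maximally_distant_leaf myx vx; have sy := maximally_distant_leaf mxy vy.
apply: cube_dist_head3; apply: (proj2 (maximally_distant_cube mxy vy)) => c l.
apply/eqP; rewrite vx => /(rcons_branch (etrans sy (esym sx))) [exy _ _].
by rewrite exy eqxx in other.
Qed.
End MaximallyDistant.

Section Leaves.
Variable m : nat.
Local Notation n := m.+2.
Local Notation V := (ccc_vertex n).

Definition leaf (x : V) := size (vseq x) == n.
Definition leaves (b : 'I_8) : {set V} := [set x | leaf x && (last_label x == b)].

Lemma leavesP (x : V) b :
  x \in leaves b -> vseq x = rcons (cube_of x) b /\ size (cube_of x) = m.+1.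
Proof.
rewrite inE => /andP [/eqP sx /eqP <-]; split; first exact: vseq_cube_of.
by move: sx; rewrite vseq_cube_of size_rcons => -[].
Qed.

Lemma leaf_top (x : V) : leaf x -> (val x).1 = ord_max.
Proof. by rewrite /leaf vseq_size => /eqP [top]; apply: val_inj. Qed.

Lemma vseq_top (x : V) : (val x).1 = ord_max -> vseq x = (val x).2.
Proof. by move=> top; rewrite /vseq top take_oversize // size_tuple. Qed.

Definition leaf_family (b : 'I_8) (i : 'I_n) : pred 'I_8 :=
  if i == 0 :> nat then predT else if i == m.+1 :> nat then pred1 b else predC1 ord0.

Lemma card_leaf_family b : #|family (leaf_family b)| = 8 * 7 ^ m.
Proof.
rewrite card_family foldrE big_map big_enum /= big_ord_recl big_ord_recr /=.
rewrite /leaf_family /= eqxx card1 muln1 cardT size_enum_ord; congr (_ * _).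
rewrite (eq_bigr (fun _ => 7)) ?prod_nat_const ?card_ord // => i _.
by rewrite /bump /= add1n eqSS (ltn_eqF (ltn_ord i)) cardC1 card_ord.
Qed.

Definition vertex_ffun (x : V) : {ffun 'I_n -> 'I_8} := [ffun i => tnth (val x).2 i].

Lemma vertex_ffun_inj x y : leaf x -> leaf y -> vertex_ffun x = vertex_ffun y -> x = y.
Proof.
move=> /leaf_top xtop /leaf_top ytop /ffunP fxy; apply: val_inj.
rewrite [val x]surjective_pairing [val y]surjective_pairing xtop ytop; congr pair.
by apply: eq_from_tnth => i; have := fxy i; rewrite !ffunE.
Qed.

Lemma vertex_ffun_leaves b :
  vertex_ffun @: leaves b = [set f in family (leaf_family b)].
Proof.
apply/setP => f; rewrite inE; apply/imsetP/familyP => [[x xb ->] i|fam].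
  move: xb; rewrite inE => /andP [xleaf /eqP <-].
  have top := leaf_top xleaf.
  rewrite ffunE /leaf_family; case: ifP => // i0; case: ifP => [/eqP im|im].
    rewrite inE /last_label vseq_top // (last_nth ord0) size_tuple.
    by rewrite (tnth_nth ord0) im.
  have := (ccc_validP (valP x) i).2; rewrite top inE /=; apply.
  by have := ltn_ord i; move: i0 im; lia.
have f_ok : ccc_valid (@ord_max m.+1, [tuple f i | i < n]).
  apply/forallP => i /=; apply/andP; split; apply/implyP => lti.
    by have := ltn_ord i; lia.
  by rewrite tnth_mktuple; have := fam i; rewrite /leaf_family !ifN_eq ?inE //; lia.
exists (exist (fun x => ccc_valid x) _ f_ok : V).
  rewrite inE /leaf /last_label vseq_top // size_tuple eqxx (last_nth ord0) size_tuple.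
  change (nth ord0 [tuple f i | i < n] (@ord_max m.+1) == b).
  by rewrite -tnth_nth tnth_mktuple; have := fam ord_max; rewrite /leaf_family /= eqxx.
by apply/ffunP => i; rewrite !ffunE tnth_mktuple.
Qed.

Lemma card_leaves b : #|leaves b| = 8 * 7 ^ m.
Proof.
rewrite -(card_leaf_family b) -[RHS]cardsE -vertex_ffun_leaves card_in_imset //.
by move=> x y; rewrite !inE => /andP [xl _] /andP [yl _]; apply: vertex_ffun_inj.
Qed.

Definition leaves_in (S : seq 'I_8) : {set V} := [set x | leaf x && (last_label x \in S)].

Lemma sum_card_leaves (R : {set V}) S : uniq S ->
  \sum_(b <- S) #|R :&: leaves b| = #|R :&: leaves_in S|.
Proof.
move=> uS; rewrite big_uniq // -sum1_card (partition_big (@last_label m) (mem S)) => [|x].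
  apply: eq_bigr => b bS; rewrite sum1dep_card; apply: eq_card => x; rewrite !inE.
  by case: eqP => [->|_]; rewrite ?bS ?andbT ?andbF.
by rewrite !inE => /and3P [].
Qed.
End Leaves.

Section StrongMetricDimension.
Variable m : nat.
Local Notation n := m.+2.
Local Notation V := (ccc_vertex n).
Local Notation maxd := (maximally_distant (@ccc_rel n) (@ccc_dist m)).
Local Notation leaves := (leaves m).
Local Notation N := (8 * 7 ^ m).
Local Notation mmd_resolvers :=
  (strongly_resolves_mmd (@ccc_dist_refl m) (@ccc_dist_edge m) (@ccc_dist_descent m)).

Definition ccc_resolving_set (x6 : V) : {set V} :=
  leaves_in m [:: 'c1; 'c2; 'c3; 'c6] :\ x6.

Lemma card_ccc_resolving_set x6 :
  x6 \in leaves 'c6 -> #|ccc_resolving_set x6| = 4 * N - 1.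
Proof.
move=> x6_leaf; have := sum_card_leaves [set: V] (S := [:: 'c1; 'c2; 'c3; 'c6]) isT.
rewrite !big_cons big_nil !setTI !card_leaves (cardsD1 x6).
have -> : x6 \in leaves_in m [:: 'c1; 'c2; 'c3; 'c6].
  by move: x6_leaf; rewrite !inE => /andP [-> /eqP ->].
by rewrite -[4 * N]/(N + (N + (N + (N + 0)))) => ->; rewrite add1n subn1.
Qed.

Lemma ccc_resolving_set_mmd x6 x y : x6 \in leaves 'c6 ->
  x != y -> maxd x y -> maxd y x ->
  (x \in ccc_resolving_set x6) || (y \in ccc_resolving_set x6).
Proof.
rewrite inE => /andP [_ /eqP x6_label] nxy mxy myx.
have in_R z w : maxd w z ->
    last_label z \in [:: 'c1; 'c2; 'c3; 'c6] -> z != x6 -> z \in ccc_resolving_set x6.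
  move=> mwz lz nz6; rewrite in_setD1 nz6 in_set lz andbT /leaf vseq_cube_of size_rcons.
  by rewrite (maximally_distant_leaf mwz (vseq_cube_of z)) eqxx.
have in_R123 z w : maxd w z ->
    last_label z \in [:: 'c1; 'c2; 'c3] -> z \in ccc_resolving_set x6.
  move=> mwz lz; apply: (in_R z w mwz).
    by move: lz; rewrite !inE => /or3P [] ->; rewrite ?orbT.
  by apply: contraTneq lz => ->; rewrite x6_label.
case: (eqVneq (cube_of x) (cube_of y)) => [same|other].
  case/orP: (mmd_same_cube mxy myx same) => [lx|ly].
    by rewrite (in_R123 _ _ myx lx).
  by rewrite (in_R123 _ _ mxy ly) orbT.
have lx : last_label x = 'c6 by apply: mmd_other_cubes myx mxy _; rewrite eq_sym.
have ly : last_label y = 'c6 by apply: mmd_other_cubes mxy myx other.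
case: (eqVneq x x6) => [ex6|nx6]; last by rewrite (in_R _ _ myx) // lx.
by rewrite (in_R _ _ mxy) ?orbT // ?ly // -ex6 eq_sym.
Qed.

Definition sibling (b : 'I_8) (x : V) := vertex_of x (rcons (cube_of x) b).

Lemma vseq_sibling a b (x : V) :
  x \in leaves a -> vseq (sibling b x) = rcons (cube_of x) b.
Proof.
case/leavesP=> vx _; apply: vseq_vertex_of; apply: (admissible_relabel (b := a)).
by rewrite -vx vseq_admissible.
Qed.

Lemma antipodal_leaves_bound (R : {set V}) a a' : strong_resolving_set (@ccc_rel n) R ->
  a != ord0 -> a' != ord0 -> cube_dist a a' = 3 ->
  N <= #|R :&: leaves a| + #|R :&: leaves a'|.
Proof.
move=> resolving na na' aa'3.
have sibling_inj : {in leaves a :\: R &, injective (sibling a')}.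
  move=> x y /setDP [xa _] /setDP [ya _] sxy.
  have [vx _] := leavesP xa; have [vy _] := leavesP ya.
  have := vseq_sibling a' xa; rewrite sxy (vseq_sibling a' ya) => /rcons_inj [cxy].
  by apply: vseq_inj; rewrite vx vy cxy.
rewrite -(card_leaves m a) -(cardsID R (leaves a)) setIC leq_add2l.
rewrite -(card_in_imset sibling_inj); apply/subset_leq_card/subsetP.
move=> y /imsetP [x /setDP [xa xR] ->]; have [vx sx] := leavesP xa.
have vsx := vseq_sibling a' xa.
have nx : x != sibling a' x.
  apply/eqP => /(congr1 (@vseq n)); rewrite vsx {1}vx => /rcons_inj [eaa'].
  by rewrite eaa' cube_dist_refl in aa'3.
have [mxs msx] := mmd_siblings vx vsx sx na na' aa'3.
case: (resolving _ _ nx) => w wR /(mmd_resolvers mxs msx) [wx|ws].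
  by rewrite -wx wR in xR.
by rewrite in_setI inE /leaf /last_label vsx size_rcons sx last_rcons !eqxx -ws wR.
Qed.

Lemma antipode_leaves_bound (R : {set V}) : strong_resolving_set (@ccc_rel n) R ->
  N <= #|R :&: leaves 'c6| + 1.
Proof.
move=> resolving; rewrite -(card_leaves m 'c6) -(cardsID R (leaves 'c6)) setIC leq_add2l.
apply/card_le1_eqP => x y /setDP [/leavesP [vx sx] xR] /setDP [/leavesP [vy sy] yR].
apply: contraTeq isT => nyx.
have nP : cube_of y != cube_of x.
  by apply: contra nyx => /eqP exy; apply/eqP/vseq_inj; rewrite vx vy exy.
have [myx mxy] := mmd_antipodes_of_heads vy vx sy sx nP.
case: (resolving _ _ nyx) => w wR /(mmd_resolvers myx mxy) [wy|wx].
  by rewrite -wy wR in yR.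
by rewrite -wx wR in xR.
Qed.

Lemma ccc_sdim_lower_bound (R : {set V}) : strong_resolving_set (@ccc_rel n) R ->
  4 * N - 1 <= #|R|.
Proof.
move=> resolving.
have := sum_card_leaves R (S := [:: 'c1; 'c7; 'c2; 'c4; 'c3; 'c5; 'c6]) isT.
rewrite !big_cons big_nil => sumR.
have := subset_leq_card (subsetIl R (leaves_in m [:: 'c1; 'c7; 'c2; 'c4; 'c3; 'c5; 'c6])).
have := antipodal_leaves_bound (a := 'c1) (a' := 'c7) resolving isT isT erefl.
have := antipodal_leaves_bound (a := 'c2) (a' := 'c4) resolving isT isT erefl.
have := antipodal_leaves_bound (a := 'c3) (a' := 'c5) resolving isT isT erefl.
have := antipode_leaves_bound resolving.
lia.
Qed.
End StrongMetricDimension.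

Theorem theorem2 (n : nat) (hn : 2 <= n) :
  is_sdim (@ccc_rel n) (32 * 7 ^ (n - 2) - 1).
Proof.
case: n hn => [|[|m]] // _; rewrite subn2 /= -[32]/(4 * 8) -mulnA.
have /card_gt0P [x6 x6_leaf] : 0 < #|leaves m 'c6| by rewrite card_leaves muln_gt0 expn_gt0.
split; last exact: ccc_sdim_lower_bound.
exists (ccc_resolving_set x6); split; last exact: card_ccc_resolving_set.
apply: (mmd_cover_strong_resolving (@ccc_dist_refl m) (@ccc_dist_edge m)
  (@ccc_dist_descent m)).
by move=> x y; apply: ccc_resolving_set_mmd.
Qed.
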